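(* Let $\mathbf{a}=\{a_i\}_{i\ge1}$ and $\mathbf{b}=\{b_i\}_{i\ge1}$ be elements of $\mathbf{C}$ and let $K,L\in(0,\infty)$. If the metric spaces $(\Upsilon, K\cdot R[\mathbf{a}])$ and $(\Upsilon, L\cdot R[\mathbf{b}])$ are isometric, then $\mathbf{a}=\mathbf{b}$.
   Context: $\mathbf{C}=\prod_{i=1}^\infty[2^{-2i},2^{-2i+1}]$, a set of sequences $\mathbf{a}=\{a_i\}_{i\ge1}$; for $\mathbf{a}\in\mathbf{C}$ one sets additionally $a_0=1$. $\Upsilon=\{(0,0)\}\cup\big((0,1]\times\mathbb{Z}_{\ge0}\big)$, and an element $(s,i)$ is written $s_i$ (so $0_0=(0,0)$). For $\mathbf{a}\in\mathbf{C}$, the metric $R[\mathbf{a}]$ on $\Upsilon$ is $R[\mathbf{a}](s_i,t_j)=a_i|s-t|$ if $i=j$ and $R[\mathbf{a}](s_i,t_j)=a_is+a_jt$ if $i\ne j$ (a compact metric tree with edges of lengths $a_i$ glued at $0_0$). *)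

From Stdlib Require Import Reals Lra Lia.
Open Scope R_scope.

(* Points of Upsilon: s_i = (s,i) with (s,i) = (0,0) or s in (0,1]. *)
Definition in_Upsilon (p : R * nat) : Prop :=
  (fst p = 0 /\ snd p = 0%nat) \/ (0 < fst p <= 1).

Definition Upsilon : Type := { p : R * nat | in_Upsilon p }.

(* A sequence a = {a_i}_{i>=1} is modelled by a : nat -> R; the value a 0
   is irrelevant and replaced by the convention a_0 = 1 (see ext0). *)
Definition in_C (a : nat -> R) : Prop :=
  forall i : nat, (1 <= i)%nat ->
    (/ 2) ^ (2 * i) <= a i <= (/ 2) ^ (2 * i - 1).

Definition ext0 (a : nat -> R) (i : nat) : R :=
  match i with O => 1 | _ => a i end.

Definition Rmet (a : nat -> R) (x y : Upsilon) : R :=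
  let s := fst (proj1_sig x) in let i := snd (proj1_sig x) in
  let t := fst (proj1_sig y) in let j := snd (proj1_sig y) in
  if Nat.eq_dec i j then ext0 a i * Rabs (s - t)
  else ext0 a i * s + ext0 a j * t.

Definition isometric_scaled (K : R) (d1 : Upsilon -> Upsilon -> R)
    (L : R) (d2 : Upsilon -> Upsilon -> R) : Prop :=
  exists (f : Upsilon -> Upsilon) (g : Upsilon -> Upsilon),
    (forall x, g (f x) = x) /\ (forall y, f (g y) = y) /\
    (forall x y, L * d2 (f x) (f y) = K * d1 x y).

(** The root [0_0] is the only branch point of the tree: the only point [p]
    admitting three points at positive distance from [p] such that [p] lies
    metrically between any two of them. Scaled isometries preserve branch
    points, so they fix the root; comparing the distance [1] from the root to
    the end of edge [0] gives [K <= L] and, symmetrically, [L <= K]. An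
    isometry fixing the root preserves distances to the root, and comparing
    the ends of two edges shows that it maps an edge of length [a_i] onto an
    edge of the same length. The intervals [[2^(-2i), 2^(-2i+1)]] are pairwise
    disjoint and contained in [(0,1)], so that edge is again edge [i]. *)
From Stdlib Require Import Reals Lra Lia Classical.
Open Scope R_scope.

Lemma half_pow_lt m n : (m < n)%nat -> (/ 2) ^ n < (/ 2) ^ m.
Proof.
  intros Hmn. rewrite !pow_inv.
  apply Rinv_lt_contravar; [|apply Rlt_pow; [lra|exact Hmn]].
  apply Rmult_lt_0_compat; apply pow_lt; lra.
Qed.

Lemma in_C_lt_1 a i : in_C a -> (1 <= i)%nat -> a i < 1.
Proof.
  intros Ha Hi. destruct (Ha i Hi) as [_ Hle].
  pose proof (half_pow_lt 0 (2 * i - 1) ltac:(lia)). simpl in *. lra.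
Qed.

Lemma ext0_pos_index a i : (1 <= i)%nat -> ext0 a i = a i.
Proof. destruct i; [lia|reflexivity]. Qed.

Lemma ext0_bounds a i : in_C a -> 0 < ext0 a i <= 1.
Proof.
  intros Ha. destruct i as [|i]; simpl; [lra|].
  destruct (Ha (S i) ltac:(lia)) as [Hge _].
  pose proof (pow_lt (/ 2) (2 * S i) ltac:(lra)).
  pose proof (in_C_lt_1 a (S i) Ha ltac:(lia)). lra.
Qed.

Lemma in_C_inj a b i j : in_C a -> in_C b -> (1 <= i)%nat -> (1 <= j)%nat ->
  a i = b j -> i = j.
Proof.
  intros Ha Hb Hi Hj E. destruct (Ha i Hi), (Hb j Hj).
  destruct (Nat.lt_trichotomy i j) as [Hl|[Hl|Hl]]; [exfalso| |exfalso]; auto.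
  - pose proof (half_pow_lt (2 * i) (2 * j - 1) ltac:(lia)). lra.
  - pose proof (half_pow_lt (2 * j) (2 * i - 1) ltac:(lia)). lra.
Qed.

Definition edge (x : Upsilon) : nat := snd (proj1_sig x).
Definition pos (x : Upsilon) : R := fst (proj1_sig x).
Definition height (a : nat -> R) (x : Upsilon) : R := ext0 a (edge x) * pos x.

Definition leaf (i : nat) : Upsilon := exist _ (1, i) (or_intror (conj Rlt_0_1 (Rle_refl 1))).
Definition root : Upsilon := exist _ (0, 0%nat) (or_introl (conj eq_refl eq_refl)).

Lemma pos_bounds x : 0 <= pos x <= 1.
Proof. destruct x as [[s i] [[Hs Hi]|Hs]]; unfold pos; simpl in *; lra. Qed.

Lemma height_leaf a i : height a (leaf i) = ext0 a i.
Proof. apply Rmult_1_r. Qed.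

Section Tree.

Variable a : nat -> R.
Hypothesis Ha : in_C a.

Lemma height_bounds x : 0 <= height a x <= ext0 a (edge x).
Proof.
  pose proof (ext0_bounds a (edge x) Ha). pose proof (pos_bounds x).
  unfold height. split; nra.
Qed.

Lemma height_pos x : 0 < pos x -> 0 < height a x.
Proof.
  intros Hx. pose proof (ext0_bounds a (edge x) Ha).
  unfold height. nra.
Qed.

Lemma Rmet_height x y : Rmet a x y =
  if Nat.eq_dec (edge x) (edge y) then Rabs (height a x - height a y)
  else height a x + height a y.
Proof.
  unfold Rmet, height. fold (pos x) (pos y) (edge x) (edge y).
  destruct (Nat.eq_dec (edge x) (edge y)) as [E|]; [|reflexivity].
  rewrite <- E, <- Rmult_minus_distr_l, Rabs_mult.
  rewrite (Rabs_pos_eq (ext0 a (edge x))); [reflexivity|].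
  pose proof (ext0_bounds a (edge x) Ha). lra.
Qed.

Lemma Rmet_root_l p y : pos p = 0 -> Rmet a p y = height a y.
Proof.
  intros Hp. pose proof (height_bounds y).
  assert (height a p = 0) by (unfold height; rewrite Hp; ring).
  rewrite Rmet_height. destruct Nat.eq_dec; [split_Rabs|]; lra.
Qed.

Lemma Rmet_root_r p y : pos p = 0 -> Rmet a y p = height a y.
Proof.
  intros Hp. pose proof (height_bounds y).
  assert (height a p = 0) by (unfold height; rewrite Hp; ring).
  rewrite Rmet_height. destruct Nat.eq_dec; [split_Rabs|]; lra.
Qed.

End Tree.

Definition is_branch_point {T : Type} (d : T -> T -> R) (p : T) : Prop :=
  exists x y z, 0 < d x p /\ 0 < d y p /\ 0 < d z p /\
    d x y = d x p + d p y /\ d y z = d y p + d p z /\ d x z = d x p + d p z.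

Lemma is_branch_point_scaled {T1 T2 : Type} (d1 : T1 -> T1 -> R) (d2 : T2 -> T2 -> R)
    c1 c2 (h : T1 -> T2) p :
  0 < c1 -> 0 < c2 -> (forall x y, c2 * d2 (h x) (h y) = c1 * d1 x y) ->
  is_branch_point d1 p -> is_branch_point d2 (h p).
Proof.
  intros H1 H2 Hh [x [y [z [Hx [Hy [Hz [Exy [Eyz Exz]]]]]]]].
  assert (Hd : forall u v, d2 (h u) (h v) = c1 / c2 * d1 u v).
  { intros u v. apply (Rmult_eq_reg_l c2); [rewrite Hh; field|]; lra. }
  assert (0 < c1 / c2) by (apply Rdiv_lt_0_compat; auto).
  exists (h x), (h y), (h z). rewrite !Hd, Exy, Eyz, Exz.
  repeat split; try nra; ring.
Qed.

Section BranchPoint.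

Variable a : nat -> R.
Hypothesis Ha : in_C a.

Lemma root_is_branch_point : is_branch_point (Rmet a) root.
Proof.
  assert (Hleaf : forall i, 0 < height a (leaf i)).
  { intros i. apply height_pos; auto. unfold pos; simpl; lra. }
  exists (leaf 0), (leaf 1), (leaf 2).
  rewrite !(Rmet_root_l a Ha root), !(Rmet_root_r a Ha root) by reflexivity.
  rewrite !(Rmet_height a Ha); simpl.
  repeat split; auto.
Qed.

(* Seen from a point [p] inside an edge, the points beyond [p] on its edge
   and all the others lie on two different sides of [p]. *)
Lemma Rmet_lt_beyond p x y :
  edge x = edge p -> edge y = edge p ->
  height a p < height a x -> height a p < height a y ->
  Rmet a x y < Rmet a x p + Rmet a p y.
Proof.
  intros Ex Ey Hx Hy. rewrite !(Rmet_height a Ha).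
  repeat destruct Nat.eq_dec; try congruence. split_Rabs; lra.
Qed.

Lemma Rmet_lt_below p x y : 0 < pos p ->
  0 < Rmet a x p -> 0 < Rmet a y p ->
  (edge x = edge p -> height a x <= height a p) ->
  (edge y = edge p -> height a y <= height a p) ->
  Rmet a x y < Rmet a x p + Rmet a p y.
Proof.
  intros Hp Hxp Hyp Hx Hy.
  pose proof (height_pos a Ha p Hp).
  pose proof (height_bounds a Ha x). pose proof (height_bounds a Ha y).
  destruct (Nat.eq_dec (edge x) (edge p)) as [Ex|]; try specialize (Hx Ex);
  destruct (Nat.eq_dec (edge y) (edge p)) as [Ey|]; try specialize (Hy Ey);
  rewrite !(Rmet_height a Ha) in *;
  repeat destruct Nat.eq_dec; try congruence; try split_Rabs; lra.
Qed.

Definition beyond (p x : Upsilon) : Prop :=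
  edge x = edge p /\ height a p < height a x.

Lemma Rmet_lt_same_side p x y : 0 < pos p ->
  0 < Rmet a x p -> 0 < Rmet a y p -> (beyond p x <-> beyond p y) ->
  Rmet a x y < Rmet a x p + Rmet a p y.
Proof.
  intros Hp Hxp Hyp Hside. unfold beyond in Hside.
  destruct (Nat.eq_dec (edge x) (edge p)) as [Ex|Ex];
  [destruct (Rlt_le_dec (height a p) (height a x)) as [Lx|Lx]|].
  - apply Rmet_lt_beyond; tauto.
  - apply Rmet_lt_below; auto.
    intros Ey. destruct (Rlt_le_dec (height a p) (height a y)); [|lra].
    enough (height a p < height a x) by lra. tauto.
  - apply Rmet_lt_below; [auto|auto|auto|congruence|].
    intros Ey. destruct (Rlt_le_dec (height a p) (height a y)); [|lra]. tauto.
Qed.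

Lemma is_branch_point_pos p : is_branch_point (Rmet a) p -> pos p = 0.
Proof.
  intros [x [y [z [Hx [Hy [Hz [Exy [Eyz Exz]]]]]]]].
  destruct (pos_bounds p) as [Hp0 _].
  destruct (Req_dec (pos p) 0) as [|Hp]; [assumption|exfalso].
  assert (Hpos : 0 < pos p) by lra.
  (* Among three points, two lie on the same side of [p]. *)
  destruct (classic (beyond p x)), (classic (beyond p y)), (classic (beyond p z));
  solve [ assert (Rmet a x y < Rmet a x p + Rmet a p y) by (apply Rmet_lt_same_side; tauto); lra
        | assert (Rmet a y z < Rmet a y p + Rmet a p z) by (apply Rmet_lt_same_side; tauto); lra
        | assert (Rmet a x z < Rmet a x p + Rmet a p z) by (apply Rmet_lt_same_side; tauto); lra ].
Qed.

End BranchPoint.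

Section ScaledIsometry.

Variables (a b : nat -> R) (c1 c2 : R) (h : Upsilon -> Upsilon).
Hypotheses (Ha : in_C a) (Hb : in_C b) (Hc1 : 0 < c1) (Hc2 : 0 < c2).
Hypothesis Hh : forall x y, c2 * Rmet b (h x) (h y) = c1 * Rmet a x y.

Lemma scaled_isometry_root : pos (h root) = 0.
Proof.
  apply (is_branch_point_pos b Hb).
  exact (is_branch_point_scaled _ _ c1 c2 h root Hc1 Hc2 Hh (root_is_branch_point a Ha)).
Qed.

Lemma scaled_isometry_scale_le : c1 <= c2.
Proof.
  pose proof (Hh root (leaf 0)) as E.
  rewrite (Rmet_root_l b Hb) in E by exact scaled_isometry_root.
  rewrite (Rmet_root_l a Ha), height_leaf in E by reflexivity.
  pose proof (height_bounds b Hb (h (leaf 0))).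
  pose proof (ext0_bounds b (edge (h (leaf 0))) Hb).
  simpl in E. nra.
Qed.

End ScaledIsometry.

Lemma isometry_edge_length a b (f : Upsilon -> Upsilon) i :
  in_C a -> in_C b -> (forall y, exists x, f x = y) ->
  (forall x y, Rmet b (f x) (f y) = Rmet a x y) -> pos (f root) = 0 ->
  ext0 b (edge (f (leaf i))) = ext0 a i.
Proof.
  intros Ha Hb Hsurj Hf Hroot.
  assert (Hheight : forall x, height b (f x) = height a x).
  { intros x. rewrite <- (Rmet_root_l b Hb _ _ Hroot), Hf.
    apply (Rmet_root_l a Ha). reflexivity. }
  set (y := f (leaf i)). set (j := edge y).
  destruct (Hsurj (leaf j)) as [z Hz].
  assert (Hyi : height b y = ext0 a i) by (unfold y; rewrite Hheight; apply height_leaf).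
  assert (Hzj : height a z = ext0 b j) by (rewrite <- Hheight, Hz; apply height_leaf).
  (* [d(z, leaf i) = d(leaf j, y) = b_j - a_i]: were [z] off edge [i], this
     would be [b_j + a_i]. *)
  assert (Hzi : Rmet a z (leaf i) = ext0 b j - ext0 a i).
  { rewrite <- Hf, Hz, (Rmet_height b Hb), height_leaf.
    fold y. destruct Nat.eq_dec as [|Hne]; [|now elim Hne].
    pose proof (height_bounds b Hb y) as Hy. fold j in Hy. split_Rabs; lra. }
  pose proof (ext0_bounds a i Ha).
  assert (Hedge : edge z = i).
  { destruct (Nat.eq_dec (edge z) i) as [|Hne]; [assumption|exfalso].
    rewrite (Rmet_height a Ha), height_leaf in Hzi.
    destruct Nat.eq_dec; [contradiction|lra]. }
  pose proof (height_bounds a Ha z) as Hz_le. rewrite Hedge in Hz_le.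
  pose proof (height_bounds b Hb y) as Hy_le. fold j in Hy_le.
  lra.
Qed.

Theorem proposition2p5 (a b : nat -> R) (K L : R) :
  in_C a -> in_C b -> 0 < K -> 0 < L ->
  isometric_scaled K (Rmet a) L (Rmet b) ->
  forall i : nat, (1 <= i)%nat -> a i = b i.
Proof.
  intros Ha Hb HK HL [f [g [_ [Hfg Hf]]]] i Hi.
  assert (Hg : forall x y, K * Rmet a (g x) (g y) = L * Rmet b x y).
  { intros x y. rewrite <- Hf, !Hfg. reflexivity. }
  pose proof (scaled_isometry_scale_le a b K L f Ha Hb HK HL Hf).
  pose proof (scaled_isometry_scale_le b a L K g Hb Ha HL HK Hg).
  assert (K = L) by lra. subst L.
  assert (Hiso : forall x y, Rmet b (f x) (f y) = Rmet a x y).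
  { intros x y. apply (Rmult_eq_reg_l K); [rewrite Hf|]; lra. }
  pose proof (isometry_edge_length a b f i Ha Hb (fun y => ex_intro _ (g y) (Hfg y))
                Hiso (scaled_isometry_root a b K K f Ha Hb HK HK Hf)) as E.
  rewrite (ext0_pos_index a i Hi) in E.
  destruct (edge (f (leaf i))) as [|j]; simpl in E.
  - pose proof (in_C_lt_1 a i Ha Hi). lra.
  - pose proof (in_C_inj a b i (S j) Ha Hb Hi ltac:(lia) (eq_sym E)). subst i.
    symmetry. exact E.
Qed.
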